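(* Let $K$ and $L$ be compact (Hausdorff) spaces. If $L$ contains a subspace homeomorphic to the Cantor space $2^\omega$ and there exists a continuous linear surjection $T\colon\mathcal C_p(K)\to\mathcal C_p(L)$, then $K$ also contains a subspace homeomorphic to $2^\omega$.
   Context: For a compact space $K$, $\mathcal C_p(K)$ denotes the vector space of continuous real-valued functions on $K$ endowed with the topology of pointwise convergence. *)

From HB Require Import structures.
From mathcomp Require Import all_boot all_order all_algebra.
From mathcomp Require Import all_classical all_reals all_analysis.
Set Implicit Arguments. Unset Strict Implicit. Unset Printing Implicit Defensive.
Import Order.TTheory GRing.Theory Num.Theory.
Import numFieldNormedType.Exports.
Local Open Scope classical_set_scope.
Local Open Scope ring_scope.

Definition homeomorphic_subspace (X Y : topologicalType) (A : set Y) : Prop :=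
  exists (f : X -> Y) (g : Y -> X),
    [/\ (forall x, A (f x)),
        (forall x, g (f x) = x),
        (forall y, A y -> f (g y) = y),
        continuous f &
        {within A, continuous g}].

Definition contains_cantor (Y : topologicalType) : Prop :=
  exists A : set Y, homeomorphic_subspace cantor_space A.

(** We represent maps C_p(K) -> C_p(L) by functions (K -> R) -> (L -> R)
    and only use their values on continuous functions. [T] is a continuous
    linear surjection C_p(K) -> C_p(L) when: it maps C(K) into C(L), it is
    linear on C(K), it is continuous on C(K) for the pointwise (product)
    topologies, and every continuous function on L is the image of a
    continuous function on K. *)
Definition Cp_cont_linear_surj (R : realType) (K L : topologicalType)
    (T : (K -> R) -> (L -> R)) : Prop :=
  [/\ (forall f : K -> R, continuous f -> continuous (T f)),
      (forall (a : R) (f g : K -> R), continuous f -> continuous g ->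
         T (fun x => a * f x + g x) = (fun y => a * T f y + T g y)),
      {within [set f : {ptws K -> R} | continuous (f : K -> R)],
         continuous ((fun f : {ptws K -> R} => (T f : {ptws L -> R})))} &
      (forall h : L -> R, continuous h ->
         exists f : K -> R, continuous f /\ T f = h)].

From HB Require Import structures.
From mathcomp Require Import all_boot all_order all_algebra.
From mathcomp Require Import all_classical all_reals all_analysis.
From mathcomp Require Import lra.
Set Implicit Arguments. Unset Strict Implicit. Unset Printing Implicit Defensive.
Import Order.TTheory GRing.Theory Num.Theory.
Import numFieldNormedType.Exports.
Local Open Scope classical_set_scope.
Local Open Scope ring_scope.

(* Fix a continuous injection [phi] of the Cantor space into [L]. For each
   [l : L] the functional [f |-> T f l] is linear and continuous on C_p(K),
   hence supported by a finite subset of [K]. By the Baire property, some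
   cylinder consists of points [y] such that [phi y] has a support with at most
   [n] points; taking [n] minimal and shrinking the cylinder, the minimal
   supports have exactly [n] points, one in each of [n] fixed disjoint open
   sets, and these points move continuously with [y]. If one of them is nowhere
   locally constant on some subcylinder, a Cantor scheme embeds the Cantor
   space into [K]. Otherwise the support is constant on a subcylinder, so
   [n + 1] distinct points of [L] share a support with [n] points; this
   contradicts the linear independence of the evaluations at these points,
   which follows from the surjectivity of [T]. *)

Lemma nbhs_ptws_agree (I : choiceType) (V : topologicalType) (z : {ptws I -> V})
    (U : set {ptws I -> V}) :
  nbhs z U -> exists s : seq I, forall g, {in s, g =1 z} -> U g.
Proof.
pose F := filter_from [set: seq I] (fun s => [set g : I -> V | {in s, g =1 z}]).
have F_filter : Filter F.
  apply: filter_from_filter; first by exists [::].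
  move=> s1 s2 _ _; exists (s1 ++ s2) => // g gz; split => i si; apply: gz;
  by rewrite mem_cat si ?orbT.
have Fz : F --> z.
  apply/cvg_sup => i; apply/cvg_image.
    by rewrite eqEsubset; split => // v _; exists (dfwith z i v).
  move=> B /= zB; exists [set g : I -> V | B (g i)].
    exists [:: i] => // g /(_ i); rewrite mem_seq1 eqxx => /(_ isT) /= ->.
    exact: nbhs_singleton.
  rewrite eqEsubset; split => [_ [g /= Bg <-] //|v Bv].
  by exists (dfwith z i v); rewrite /= dfwithin.
by move=> /Fz [s _ sU]; exists s => g gz; exact: sU.
Qed.

(** * Cylinders of the Cantor space *)

(* [cylinder y m z] unfolds to a product, so lemmas concluding with it get
   implicit point arguments; hence the occasional [@]. *)
Definition cylinder (y : cantor_space) (m : nat) : set cantor_space :=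
  [set z | forall i, (i < m)%N -> z i = y i].

Lemma cylinder_center y m : cylinder y m y.
Proof. by []. Qed.

Lemma cylinderS y m m' : (m <= m')%N -> cylinder y m' `<=` cylinder y m.
Proof. by move=> mm' z yz i im; apply: yz; exact: leq_trans mm'. Qed.

Lemma cylinder_sub y z m m' :
  (m <= m')%N -> cylinder y m z -> cylinder z m' `<=` cylinder y m.
Proof. by move=> mm' yz w zw i im; rewrite zw ?yz //; exact: leq_trans mm'. Qed.

Lemma nbhs_cylinder y (U : set cantor_space) :
  nbhs y U -> exists m, cylinder y m `<=` U.
Proof.
move=> /nbhs_ptws_agree [s sU]; exists (\max_(i <- s) i.+1)%N => z yz.
apply: sU => i si; apply: yz.
exact: (@leq_bigmax_seq _ s xpredT succn i si isT).
Qed.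

Lemma cylinder_nbhs y m : nbhs y (cylinder y m).
Proof.
have coord i : nbhs y [set z : cantor_space | z i = y i].
  apply: open_nbhs_nbhs; split => //.
  have : open (proj i @^-1` [set y i] : set cantor_space); last by [].
  by apply: open_comp; [move=> + _; exact: proj_continuous | exact: discrete_open].
have : \forall z \near y, forall i : 'I_m, (z : cantor_space) i = y i.
  by apply: (@filter_forall _ _ _ _ (nbhs_filter y)) => i; exact: coord.
by apply: filterS => z yz i im; exact: (yz (Ordinal im)).
Qed.

Lemma cylinder_open y m : open (cylinder y m).
Proof.
rewrite openE => z yz; apply: filterS (cylinder_nbhs z m).
exact: cylinder_sub (leqnn m) yz.
Qed.

Lemma continuous_cylinderP (X : topologicalType) (f : cantor_space -> X) :
  continuous f <->
  forall y U, open U -> U (f y) -> exists m, cylinder y m `<=` f @^-1` U.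
Proof.
split => [cf y U oU Ufy|fcyl y W /=].
  by apply: nbhs_cylinder; apply: cf; exact: open_nbhs_nbhs.
rewrite nbhsE => -[U [oU Ufy] UW]; have [m yU] := fcyl y U oU Ufy.
by rewrite nbhs_simpl; apply: filterS (cylinder_nbhs y m) => z /yU /UW.
Qed.

Lemma within_continuous_cylinderP (X : topologicalType) (C : set cantor_space)
    (f : cantor_space -> X) :
  {within C, continuous f} <->
  forall y, C y -> forall U, open U -> U (f y) ->
    exists m, cylinder y m `&` C `<=` f @^-1` U.
Proof.
rewrite subspace_continuousP; split => [cf y Cy U oU Ufy|fcyl y Cy W /=].
  have /nbhs_cylinder [m yU] : nbhs y [set z | C z -> U (f z)].
    by apply: (cf y Cy); exact: open_nbhs_nbhs.
  by exists m => z [/yU]; apply.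
rewrite nbhsE => -[U [oU Ufy] UW]; have [m yU] := fcyl y Cy U oU Ufy.
rewrite nbhs_simpl; apply: filterS (cylinder_nbhs y m) => z yz Cz.
exact/UW/yU.
Qed.

Section NestedCylinders.
Variable Q : nat -> cantor_space * nat.
Hypothesis Q_in : forall k, cylinder (Q k).1 (Q k).2 (Q k.+1).1.
Hypothesis Q_lt : forall k, ((Q k).2 < (Q k.+1).2)%N.

Definition nested_limit : cantor_space := fun i => (Q i.+1).1 i.

Let Q_ge k : (k <= (Q k).2)%N.
Proof. by elim: k => // k IH; exact: leq_ltn_trans IH (Q_lt _). Qed.

Let Q_nested k k' :
  (k <= k')%N -> cylinder (Q k').1 (Q k').2 `<=` cylinder (Q k).1 (Q k).2.
Proof.
elim: k' => [|k' IH]; first by rewrite leqn0 => /eqP->.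
rewrite leq_eqVlt => /predU1P[->//|]; rewrite ltnS => /IH kk'.
exact: subset_trans (cylinder_sub (ltnW (Q_lt k')) (@Q_in k')) kk'.
Qed.

Lemma nested_limit_in k : cylinder (Q k).1 (Q k).2 nested_limit.
Proof.
move=> i ik; rewrite /nested_limit; case: (leqP i.+1 k) => [ik1|/ltnW ki].
  by rewrite (Q_nested ik1 (@cylinder_center _ _)) // (leq_trans _ (Q_ge _)).
by rewrite (Q_nested ki (@cylinder_center _ _)).
Qed.

End NestedCylinders.

Lemma cylinder_baire (S : nat -> set cantor_space) :
  (forall n, closed (S n)) -> (forall y, exists n, S n y) ->
  exists n y m, cylinder y m `<=` S n.
Proof.
move=> clS coverS; apply/not_existsP => noint.
have shrink (nq : nat * (cantor_space * nat)) : exists q : cantor_space * nat,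
    [/\ cylinder nq.2.1 nq.2.2 q.1, (nq.2.2 < q.2)%N &
        cylinder q.1 q.2 `<=` ~` S nq.1].
  case: nq => n [y m] /=.
  have /existsNP [z /not_implyP [yz nSz]] : ~ (cylinder y m `<=` S n).
    by move=> yS; apply: (noint n); exists y, m.
  have /nbhs_cylinder [m' zS] : nbhs z (~` S n).
    by apply: open_nbhs_nbhs; split => //; rewrite openC.
  exists (z, (maxn m m').+1); split => //=; first by rewrite ltnS leq_maxl.
  by apply: subset_trans zS; apply: cylinderS; rewrite leqW // leq_maxr.
have [next nextP] := choice shrink.
pose fix Q k := if k is k'.+1 then next (k', Q k') else (point, 0%N).
have Q_in k : cylinder (Q k).1 (Q k).2 (Q k.+1).1 by have [] := nextP (k, Q k).
have Q_lt k : ((Q k).2 < (Q k.+1).2)%N by have [] := nextP (k, Q k).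
have [n Sn] := coverS (nested_limit Q).
have [_ _ nS] := nextP (n, Q n); apply: (nS _ _ Sn).
exact: (nested_limit_in (k := n.+1) Q_in Q_lt).
Qed.

(** * Embedding the Cantor space *)

Lemma contains_cantor_injective (K : topologicalType) (F : cantor_space -> K) :
  hausdorff_space K -> continuous F -> injective F -> contains_cantor K.
Proof.
move=> hK cF iF; pose g k := if pselect (exists s, F s = k) is left H
  then projT1 (cid H) else point.
have gF s : g (F s) = s.
  rewrite /g; case: pselect => [H|[]]; last by exists s.
  by apply: iF; exact: (projT2 (cid H)).
exists (range F), F, g; split => //; first by move=> _ [s _ <-]; rewrite gF.
apply/subspace_continuousP => _ [s _ <-]; rewrite /from_subspace gF.
move=> W /= /nbhs_cylinder [m sW]; rewrite nbhs_simpl /=.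
suff : nbhs (F s) (fun k => range F k -> W (g k)) by [].
have clFC : closed (F @` ~` cylinder s m).
  apply: (compact_closed hK); apply: continuous_compact.
    exact: continuous_subspaceT.
  apply: (subclosed_compact _ cantor_space_compact) => //.
  by rewrite closedC; exact: cylinder_open.
have : nbhs (F s) (~` (F @` ~` cylinder s m)).
  apply: open_nbhs_nbhs; split; first by rewrite openC.
  by move=> [t st /iF ts]; apply: st; rewrite ts.
apply: filterS => k Fk [t _ tk]; rewrite -tk gF; apply: sW.
by apply: contrapT => st; apply: Fk; exists t.
Qed.

Definition nowhere_locally_constant_on (X : Type) (w : cantor_space) (p : nat)
    (x : cantor_space -> X) :=
  forall v q, cylinder w p v -> (p <= q)%N ->
    exists a b, [/\ cylinder v q a, cylinder v q b & x a <> x b].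

Section CantorScheme.
Variable K : topologicalType.
Hypothesis hK : hausdorff_space K.
Variables (x : cantor_space -> K) (w : cantor_space) (p : nat).
Hypothesis x_cont : {within cylinder w p, continuous x}.
Hypothesis x_nlc : nowhere_locally_constant_on w p x.

Let inside (q : cantor_space * nat) := cylinder w p q.1 /\ (p <= q.2)%N.

Let splitting (q : cantor_space * nat) (c : bool -> cantor_space * nat) :=
  [/\ forall b, cylinder q.1 q.2 (c b).1, forall b, (q.2 < (c b).2)%N &
      forall z1 z2, cylinder (c true).1 (c true).2 z1 ->
        cylinder (c false).1 (c false).2 z2 -> x z1 <> x z2].

Let splitting_exists q : exists c, inside q -> splitting q c.
Proof.
have [[qw pq]|] := pselect (inside q); last by move=> nq; exists (fun=> q).
have [a [b [qa qb xab]]] := x_nlc qw pq.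
have [A [B]] : exists A B, [/\ open A, open B, A (x a), B (x b) & A `&` B = set0].
  have := hK; rewrite open_hausdorff => /(_ (x a) (x b)) [].
    exact/eqP.
  by move=> [A B] /= [/set_mem Aa /set_mem Bb] [oA oB /eqP AB0]; exists A, B.
move=> [oA oB Axa Bxb AB0].
have child_in v m : cylinder q.1 q.2 v -> cylinder v (maxn m q.2).+1 `<=`
    cylinder v m `&` cylinder w p.
  move=> qv z vz; split; first by apply: cylinderS vz; rewrite leqW ?leq_maxl.
  apply: (cylinder_sub pq qw); apply: (cylinder_sub _ qv) vz.
  by rewrite leqW ?leq_maxr.
have wq : cylinder q.1 q.2 `<=` cylinder w p := cylinder_sub pq qw.
have [ma aA] := (within_continuous_cylinderP _ _).1 x_cont a (wq _ qa) A oA Axa.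
have [mb bB] := (within_continuous_cylinderP _ _).1 x_cont b (wq _ qb) B oB Bxb.
exists (fun c => if c then (a, (maxn ma q.2).+1) else (b, (maxn mb q.2).+1)) => _.
split; [by case|by case => /=; rewrite ltnS leq_maxr|].
move=> z1 z2 /= /(child_in _ _ qa) /aA Az1 /(child_in _ _ qb) /bB Bz2 xz12.
have : (A `&` B) (x z1) by split => //; rewrite xz12.
by rewrite AB0.
Qed.

Let split_at q := projT1 (cid (splitting_exists q)).

Let split_atP q : inside q -> splitting q (split_at q).
Proof. exact: projT2 (cid (splitting_exists q)). Qed.

Let split_inside q b : inside q -> inside (split_at q b).
Proof.
move=> [qw pq]; have [qc qlt _] := split_atP (conj qw pq); split.
  exact: cylinder_sub pq qw _ (qc b).
exact: leq_trans pq (ltnW (qlt b)).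
Qed.

(* [scheme s] follows the branch [s] of the binary tree of cylinders built by
   [split_at]; the two children of a node have disjoint images under [x]. *)
Let scheme (s : cantor_space) : nat -> cantor_space * nat :=
  fix Q k := if k is k'.+1 then split_at (Q k') (s k') else (w, p).

Let scheme_inside s k : inside (scheme s k).
Proof. by elim: k => [|k IH]; [split | exact: split_inside]. Qed.

Let scheme_in s k : cylinder (scheme s k).1 (scheme s k).2 (scheme s k.+1).1.
Proof. by have [qc _ _] := split_atP (scheme_inside s k); exact: qc. Qed.

Let scheme_lt s k : ((scheme s k).2 < (scheme s k.+1).2)%N.
Proof. by have [_ qlt _] := split_atP (scheme_inside s k); exact: qlt. Qed.

Let scheme_agree s t k : cylinder s k t -> scheme s k = scheme t k.
Proof.
elim: k => [//|k IH] st /=; rewrite IH; last exact: cylinderS st.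
by rewrite (st k).
Qed.

Let e s := nested_limit (scheme s).

Let e_in s k : cylinder (scheme s k).1 (scheme s k).2 (e s).
Proof. exact: (nested_limit_in (k := k) (@scheme_in s) (scheme_lt s)). Qed.

Let scheme_map_continuous : continuous (x \o e).
Proof.
apply/continuous_cylinderP => s U oU Ux.
have [m sU] := (within_continuous_cylinderP _ _).1 x_cont (e s) (@e_in s 0) U oU Ux.
exists m => t st; apply: sU; split; last exact: (@e_in t 0).
by move=> i im; rewrite /e /nested_limit (scheme_agree (cylinderS im st)).
Qed.

Let scheme_map_injective : injective (x \o e).
Proof.
move=> s t /= xst; apply: contrapT => nst.
have [k skt st] : exists2 k, s k != t k & cylinder s k t.
  have [|k skt kmin] := ex_minnP (P := fun i => s i != t i).
    apply: contrapT => /forallNP eq_st; apply/nst/funext => i.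
    by have := eq_st i; case: eqP.
  exists k => // i ik; apply/esym/eqP; apply: contraTT ik => /kmin.
  by rewrite -leqNgt.
have [_ _ sep] := split_atP (scheme_inside s k).
have := @e_in s k.+1; have := @e_in t k.+1 => /=; rewrite -(scheme_agree st).
move: skt; case: (s k); case: (t k) => // _ et es.
  exact: sep _ _ es et xst.
exact: sep _ _ et es (esym xst).
Qed.

Lemma contains_cantor_scheme : contains_cantor K.
Proof.
exact: contains_cantor_injective hK scheme_map_continuous scheme_map_injective.
Qed.

End CantorScheme.

Lemma constant_or_nowhere_locally_constant (X : Type) (x : nat -> cantor_space -> X)
    (w : cantor_space) (M n : nat) :
  (exists2 j, (j < n)%N & exists v p, cylinder v p `<=` cylinder w M /\
     nowhere_locally_constant_on v p (x j)) \/
  exists v p, cylinder v p `<=` cylinder w M /\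
    forall j z, (j < n)%N -> cylinder v p z -> x j z = x j v.
Proof.
elim: n => [|n [[j jn nlc]|[v [p [vw xv]]]]]; first by right; exists w, M; split.
  by left; exists j => //; exact: ltnW.
have [nlc|nlc] := pselect (nowhere_locally_constant_on v p (x n)).
  by left; exists n => //; exists v, p.
have [v' [p' [vv' pp' const]]] : exists v' p', [/\ cylinder v p v', (p <= p')%N &
    forall a, cylinder v' p' a -> x n a = x n v'].
  apply: contrapT => no_const; apply: nlc => v' p' vv' pp'.
  apply: contrapT => no_split; apply: no_const; exists v', p'; split => // a v'a.
  by apply: contrapT => ne; apply: no_split; exists a, v'; split.
right; exists v', p'; have sub := cylinder_sub pp' vv'; split.
  exact: subset_trans sub vw.
move=> j z; rewrite ltnS leq_eqVlt => /predU1P [->|jn] v'z; first exact: const.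
by rewrite (xv j z jn (sub _ v'z)) (xv j v' jn (sub _ (@cylinder_center v' p'))).
Qed.

Lemma hausdorff_closed_seq (X : topologicalType) (G : seq X) :
  hausdorff_space X -> closed [set` G].
Proof.
move=> hX; apply: (accessible_finite_set_closed.1 (hausdorff_accessible hX)).
exact: finite_seq.
Qed.

Lemma continuousM_fun (R : realType) (X : topologicalType) (f g : X -> R) :
  continuous f -> continuous g -> continuous (fun x => f x * g x).
Proof. by move=> cf cg x; exact: (@continuousM R X f g x (cf x) (cg x)). Qed.

Lemma continuousB_fun (R : realType) (X : topologicalType) (f g : X -> R) :
  continuous f -> continuous g -> continuous (fun x => f x - g x).
Proof.
move=> cf cg x; apply: (@continuousD R R^o X f (fun x => - g x) x (cf x)).
exact: (@continuousN R R^o X g x (cg x)).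
Qed.

Section CompactHausdorff.
Variables (R : realType) (X : topologicalType).
Hypotheses (cX : compact [set: X]) (hX : hausdorff_space X).

Lemma exists_bump (A : set X) (x : X) : closed A -> ~ A x ->
  exists u : X -> R, [/\ continuous u, u x = 1 & forall z, A z -> u z = 0].
Proof.
move=> clA Ax; have Ax0 : A `&` [set x] = set0.
  by rewrite -subset0 => z [Az /= zx]; apply: Ax; rewrite -zx.
have /(_ _ _ clA (@accessible_closed_set1 X (hausdorff_accessible hX) x) Ax0) :=
  (@normal_separatorP R X).1 (compact_normal hX cX).
move=> /(@uniform_separatorP _ R) [u [cu _ u0 u1]].
by exists u; split => [||z Az]; [|apply: u1; exists x|apply: u0; exists z].
Qed.

Lemma disjoint_open_nbhs_seq (G : seq X) (x0 : X) : uniq G ->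
  exists N : nat -> set X, [/\ forall j, open (N j),
    forall j, (j < size G)%N -> N j (nth x0 G j) & trivIset `I_(size G) N].
Proof.
move=> uG; set n := size G.
have /choice [h hP] : forall j, exists hj : X -> R, continuous hj /\
    ((j < n)%N -> forall i, (i < n)%N -> hj (nth x0 G i) = (i == j)%:R).
  move=> j; case: (ltnP j n) => jn; last first.
    by exists (fun=> 0); split => //; exact: cst_continuous.
  pose A := [set` [seq z <- G | z != nth x0 G j]].
  have [|u [cu u1 u0]] := @exists_bump A (nth x0 G j) (hausdorff_closed_seq hX).
    by rewrite /A /= mem_filter eqxx.
  exists u; split => // _ i ilt; case: eqVneq => [->//|ij]; apply: u0.
  by rewrite /A /= mem_filter mem_nth // andbT nth_uniq.
pose O i j := [set z | if i == j then 1/2 < h i z else h i z < 1/2].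
exists (fun j => [set z | forall i, (i < n)%N -> O i j z]); split.
- move=> j; rewrite openE => z zN.
  have Oij (i : 'I_n) : nbhs z (O i j).
    have pre (V : set R) : open V -> V (h i z) -> nbhs z (h i @^-1` V).
      by move=> oV Vz; have /((hP i).1 z) : nbhs (h i z) V by exact: open_nbhs_nbhs.
    have := zN _ (ltn_ord i); rewrite /O; case: eqP => _ hz.
      exact: (pre _ (@open_gt _ _) hz).
    exact: (pre _ (@open_lt _ _) hz).
  have : \forall z' \near z, forall i : 'I_n, O i j z'.
    by apply: (@filter_forall _ _ _ _ (nbhs_filter z)) => i; exact: Oij.
  by apply: filterS => z' Oz' i ilt; exact: (Oz' (Ordinal ilt)).
- move=> j jn i ilt; rewrite /O /= (hP i).2 //.
  by case: eqVneq => _ /=; lra.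
- move=> i j ilt jlt [z [zi zj]]; apply/eqP; apply: contraT => ij.
  by move: (zi i ilt) (zj i ilt); rewrite /O /= eqxx (negPf ij); lra.
Qed.

End CompactHausdorff.

Lemma exists_vanishing_combination (F : fieldType) (X : eqType) n
    (f : 'I_n -> X -> F) (G : seq X) :
  (size G < n)%N ->
  exists2 a : 'rV[F]_n, a != 0 & forall x, x \in G -> \sum_i a 0 i * f i x = 0.
Proof.
move=> Gn; pose A : 'M[F]_(n, size G) := \matrix_(i, j) f i (tnth (in_tuple G) j).
have /rowV0Pn [a /sub_kermxP aA a0] : kermx A != 0.
  rewrite kermx_eq0 /row_free; apply: contraTneq Gn => <-.
  by rewrite -leqNgt rank_leq_col.
exists a => // x xG; have /tnthP [j ->] : x \in in_tuple G by [].
have := congr1 (fun M : matrix F 1 (size G) => M 0 j) aA; rewrite !mxE => aAj.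
by rewrite -[RHS]aAj; apply: eq_bigr => i _; rewrite mxE.
Qed.

Definition meets_each (X : eqType) (G : seq X) (N : nat -> set X) k :=
  forall j, (j < k)%N -> exists2 x, x \in G & N j x.

Section Pigeonhole.
Variables (X : eqType) (G : seq X) (N : nat -> set X) (k : nat).
Hypotheses (dN : trivIset `I_k N) (GN : meets_each G N k).

Let hits : exists2 c : 'I_k -> X, injective c & forall j, c j \in G /\ N j (c j).
Proof.
have /choice [c cP] : forall j : 'I_k, exists x, x \in G /\ N j x.
  by move=> j; have [x xG Nx] := GN (ltn_ord j); exists x.
exists c => // i j cij; apply: ord_inj; apply: (dN (ltn_ord i) (ltn_ord j)).
by exists (c i); split; [|rewrite cij]; [exact: (cP i).2 | exact: (cP j).2].
Qed.

Let hits_seq : exists2 c : 'I_k -> X, uniq (map c (enum 'I_k)) &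
  [/\ size (map c (enum 'I_k)) = k, {subset map c (enum 'I_k) <= G} &
      forall j : 'I_k, N j (c j)].
Proof.
have [c c_inj cP] := hits; exists c; first by rewrite map_inj_uniq ?enum_uniq.
split => [|_ /mapP [j _ ->]|j]; first by rewrite size_map size_enum_ord.
  exact: (cP j).1.
exact: (cP j).2.
Qed.

Lemma meets_each_size : (k <= size G)%N.
Proof.
by have [c uc [sc cG _]] := hits_seq; have := uniq_leq_size uc cG; rewrite sc.
Qed.

Lemma meets_each_unique : (size G <= k)%N -> forall x, x \in G ->
  exists j, [/\ (j < k)%N, N j x & forall x', x' \in G -> N j x' -> x' = x].
Proof.
have [c uc [sc cG cN]] := hits_seq => Gk.
have [_ cGE] := uniq_min_size uc cG (leq_trans Gk (eq_leq (esym sc))).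
have inv z : z \in G -> exists j, z = c j.
  by rewrite -cGE => /mapP [j _ ->]; exists j.
move=> _ /inv [j ->]; exists j; split => // _ /inv [i ->] Nji.
congr c; apply: ord_inj; apply: (dN (ltn_ord i) (ltn_ord j)).
by exists (c i); split.
Qed.

End Pigeonhole.

(** * Finite supports of the functionals [f |-> T f l] *)

Section LinearOnContinuous.
Variables (R : realType) (K L : topologicalType) (T : (K -> R) -> (L -> R)).
Hypothesis T_lin : forall (a : R) (f g : K -> R), continuous f -> continuous g ->
  T (fun x => a * f x + g x) = (fun y => a * T f y + T g y).

Let cst0 : continuous (fun _ : K => 0 : R).
Proof. exact: cst_continuous. Qed.

Lemma T0 : T (fun _ => 0) = (fun _ => 0).
Proof.
apply/funext => y; have /= := congr1 (fun h => h y) (T_lin (-1) cst0 cst0).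
by rewrite mulN1r addNr => ->; rewrite mulN1r addNr.
Qed.

Lemma TZ (a : R) (f : K -> R) : continuous f ->
  T (fun x => a * f x) = (fun y => a * T f y).
Proof.
move=> cf; have := T_lin a cf cst0; rewrite T0.
by under eq_fun do rewrite addr0; under [RHS]eq_fun do rewrite addr0.
Qed.

Lemma TB (f g : K -> R) : continuous f -> continuous g ->
  T (fun x => f x - g x) = (fun y => T f y - T g y).
Proof.
move=> cf cg; have := T_lin (-1) cg cf.
by under eq_fun do rewrite mulN1r addrC; under [RHS]eq_fun do rewrite mulN1r addrC.
Qed.

Lemma T_sum n (a : 'I_n -> R) (f : 'I_n -> K -> R) : (forall i, continuous (f i)) ->
  continuous (fun x => \sum_i a i * f i x) /\
  T (fun x => \sum_i a i * f i x) = (fun y => \sum_i a i * T (f i) y).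
Proof.
elim: n a f => [|n IH] a f cf.
  have -> : (fun x => \sum_(i < 0) a i * f i x) = (fun _ => 0).
    by apply/funext => x; rewrite big_ord0.
  by rewrite T0; split; [exact: cst0 | apply/funext => y; rewrite big_ord0].
pose w := widen_ord (leqnSn n).
have [cS TS] := IH (a \o w) (f \o w) (fun i => cf (w i)).
have -> : (fun x => \sum_(i < n.+1) a i * f i x) =
    (fun x => a ord_max * f ord_max x + \sum_(i < n) a (w i) * f (w i) x).
  by apply/funext => x; rewrite big_ord_recr addrC.
split; last by rewrite T_lin // TS; apply/funext => y; rewrite big_ord_recr addrC.
move=> x; apply: (@continuousD R R^o K _ _ x _ (cS x)).
by apply: continuousM; [exact: cst_continuous | exact: cf].
Qed.

End LinearOnContinuous.

Section Supports.
Variables (R : realType) (K L : topologicalType).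
Hypotheses (cK : compact [set: K]) (hK : hausdorff_space K).
Hypotheses (cL : compact [set: L]) (hL : hausdorff_space L).
Variable T : (K -> R) -> (L -> R).
Hypothesis HT : Cp_cont_linear_surj T.

Let T_cont f : continuous f -> continuous (T f).
Proof. by case: HT => + _ _ _; apply. Qed.

Let T_lin (a : R) (f g : K -> R) : continuous f -> continuous g ->
  T (fun x => a * f x + g x) = (fun y => a * T f y + T g y).
Proof. by case: HT => _ + _ _; apply. Qed.

Let T_onto (h : L -> R) : continuous h -> exists f, continuous f /\ T f = h.
Proof. by case: HT => _ _ _; apply. Qed.

Lemma Cp_surj_nonempty (l : L) : [set: K] !=set0.
Proof.
apply: contrapT => K0.
have cst r : continuous (fun _ : L => r : R) by exact: cst_continuous.
have [f0 [_ Tf0]] := T_onto (cst 0); have [f1 [_ Tf1]] := T_onto (cst 1).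
have f01 : f0 = f1 by apply/funext => x; exfalso; apply: K0; exists x.
have := congr1 (fun h => h l) Tf1; rewrite -f01 Tf0 => /eqP.
by rewrite eq_sym oner_eq0.
Qed.

Definition supports (l : L) (G : seq K) :=
  forall f, continuous f -> {in G, forall x, f x = 0} -> T f l = 0.

Definition min_support (l : L) (G : seq K) :=
  supports l G /\ forall G', supports l G' -> (size G <= size G')%N.

Definition essential (l : L) (p : K) := forall N, open N -> N p ->
  exists f, [/\ continuous f, forall z, ~ N z -> f z = 0 & T f l != 0].

(* By continuity at [0] for the pointwise topology, [|T g l| < 1] for all [g]
   vanishing on some finite [s]; these [g] form a vector space, so in fact
   [T g l = 0]. *)
Lemma exists_support l : exists G, supports l G.
Proof.
case: HT => _ _ /subspace_continuousP T_ptws _.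
have cst0 : continuous (fun _ : K => 0 : R) by exact: cst_continuous.
have : nbhs (T (fun _ => 0) l) [set r : R | `|r| < 1].
  by rewrite (T0 T_lin); exact: (@nbhs0_lt R R^o 1 ltr01).
move=> /(@proj_continuous L (fun _ => R) l (T (fun _ => 0))) /(T_ptws _ cst0).
rewrite /= nbhs_simpl /= => /nbhs_ptws_agree [s sW].
exists s => f cf f0; apply: contrapT => /eqP Tf0.
have cg : continuous (fun x => (T f l)^-1 * f x).
  by apply: continuousM_fun => //; exact: cst_continuous.
have gs : {in s, (fun x => (T f l)^-1 * f x) =1 (fun _ => 0)}.
  by move=> x /f0 /= ->; rewrite mulr0.
have /(_ cg) := sW _ gs.
by rewrite /from_subspace /= (TZ T_lin) // /proj mulVf // normr1 ltxx.
Qed.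

Lemma exists_min_support l : exists G, min_support l G.
Proof.
have [G0 G0l] := exists_support l.
have ex : exists k, `[< exists2 G, size G = k & supports l G >].
  by exists (size G0); apply/asboolP; exists G0.
case: (ex_minnP ex) => k /asboolP [G <- Gl] kmin.
by exists G; split => // G' G'l; apply: kmin; apply/asboolP; exists G'.
Qed.

Lemma essential_mem l p G : essential l p -> supports l G -> p \in G.
Proof.
move=> ep Gl; apply: contraT => pG.
have [f [cf f0]] := ep _ (closed_openC (hausdorff_closed_seq hK)) (negP pG).
by rewrite Gl ?eqxx // => x xG; apply: f0 => /(_ xG).
Qed.

Lemma min_support_uniq l G : min_support l G -> uniq G.
Proof.
move=> [Gl Gmin]; rewrite -[uniq G]negbK -ltn_size_undup -leqNgt.
by apply: Gmin => f cf f0; apply: Gl => // x xG; apply: f0; rewrite mem_undup.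
Qed.

(* A function witnessing that [rem p G] is not a support, cut down near [p] by
   a bump function, does not change its image at [l]. *)
Lemma min_support_essential l G :
  min_support l G -> {in G, forall p, essential l p}.
Proof.
move=> [Gl Gmin] p pG N oN Np.
have : ~ supports l (rem p G).
  by move=> /Gmin; rewrite size_rem //; case: (G) pG => //= a G' _; rewrite ltnn.
move=> /existsNP [f /not_implyP [cf /not_implyP [f0 /eqP Tf]]].
have [u [cu up uN]] := exists_bump R cK hK (open_closedC oN) (fun N'p => N'p Np).
have cuf : continuous (fun z => u z * f z) by exact: continuousM_fun.
exists (fun z => u z * f z); split => // [z Nz|]; first by rewrite uN ?mul0r.
have : T (fun z => u z * f z - f z) l = 0.
  apply: Gl => [|x xG]; first exact: continuousB_fun.
  case: (eqVneq x p) => [->|xp]; first by rewrite up mul1r subrr.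
  by rewrite f0 ?mulr0 ?subrr // rem_mem.
by rewrite (TB T_lin) // => /eqP; rewrite subr_eq0 => /eqP ->.
Qed.

Lemma near_supports_meet l G : min_support l G ->
  exists N : nat -> set K, [/\ forall j, open (N j), trivIset `I_(size G) N &
    \forall l' \near l, forall G', supports l' G' -> meets_each G' N (size G)].
Proof.
move=> Gmin; case: G Gmin => [|x0 G'] Gmin.
  exists (fun=> set0); split => [j|i j|]; [exact: open0 | by [] |].
  by apply: (@filterE _ _ (nbhs_filter l)) => l' G' _ j.
set G := x0 :: G' in Gmin *.
have [N [oN GN dN]] := disjoint_open_nbhs_seq R cK hK x0 (min_support_uniq Gmin).
have /choice [F FP] : forall j, exists F, (j < size G)%N ->
    [/\ continuous F, forall z, ~ N j z -> F z = 0 & T F l != 0].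
  move=> j; case: (ltnP j (size G)) => jG; last by exists (fun=> 0).
  have [F FP] := min_support_essential Gmin (mem_nth x0 jG) (oN j) (GN j jG).
  by exists F.
exists N; split => //.
have : \forall l' \near l, forall j : 'I_(size G), T (F j) l' != 0.
  apply: (@filter_forall _ _ _ _ (nbhs_filter l)) => j.
  by have [cF _ TF] := FP j (ltn_ord j); apply: cvgr_neq0 TF; exact: T_cont.
apply: filterS => l' TF G'' G''l' j jG; apply: contrapT => /forall2NP NG''.
have [cF F0 _] := FP j jG; move: (TF (Ordinal jG)) => /eqP; apply.
apply: G''l' => // x xG''; apply: F0 => Nx.
by case: (NG'' x) => [/(_ xG'')|].
Qed.

(* By surjectivity of [T] the functionals [f |-> T f (q i)] are linearly
   independent, while all of them factor through the restriction to [G]. *)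
Lemma no_common_support (G : seq K) (q : 'I_(size G).+1 -> L) :
  injective q -> ~ (forall i, supports (q i) G).
Proof.
move=> q_inj Gq.
have /choice [f fP] : forall i, exists f,
    continuous f /\ forall j, T f (q j) = (i == j)%:R.
  move=> i; pose A := [set` [seq q j | j <- enum 'I_(size G).+1 & j != i]].
  have nA : ~ A (q i).
    rewrite /A /= => /mapP [j]; rewrite mem_filter => /andP [ji _] /q_inj ij.
    by rewrite ij eqxx in ji.
  have [h [ch hi h0]] := exists_bump R cL hL (hausdorff_closed_seq hL) nA.
  have [f [cf Tf]] := T_onto ch; exists f; split => // j; rewrite Tf.
  case: eqVneq => [<-//|ij]; apply: h0; apply/mapP; exists j => //.
  by rewrite mem_filter mem_enum eq_sym ij.
have [a a0 aG] := exists_vanishing_combination f (ltnSn (size G)).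
have [cF TF] := T_sum T_lin (fun i => a 0 i) (fun i => (fP i).1).
move/negP: a0; apply; apply/eqP/rowP => k; rewrite mxE.
have := Gq k _ cF aG; rewrite TF (bigD1 k) //= big1 => [|i ik]; last first.
  by rewrite (fP i).2 (negPf ik) mulr0.
by rewrite (fP k).2 eqxx mulr1 addr0.
Qed.

End Supports.

(** * Supports along a copy of the Cantor space *)

Section CantorSupports.
Variables (R : realType) (K L : topologicalType).
Hypotheses (cK : compact [set: K]) (hK : hausdorff_space K).
Hypotheses (cL : compact [set: L]) (hL : hausdorff_space L).
Variable T : (K -> R) -> (L -> R).
Hypothesis HT : Cp_cont_linear_surj T.
Variable phi : cantor_space -> L.
Hypotheses (phi_cont : continuous phi) (phi_inj : injective phi).

Let T_cont f : continuous f -> continuous (T f).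
Proof. by case: HT => + _ _ _; apply. Qed.

Definition small_support n y := exists2 G, (size G <= n)%N & supports T (phi y) G.

Lemma small_support_closed n : closed (small_support n).
Proof.
rewrite -openC openE => y nSy; rewrite /interior.
have [G [Gy Gmin]] := exists_min_support HT (phi y).
have nG : (n < size G)%N by rewrite ltnNge; apply/negP => Gn; apply: nSy; exists G.
have [N [_ dN near]] := near_supports_meet cK hK HT (conj Gy Gmin).
have : \forall z \near y,
    forall G', supports T (phi z) G' -> meets_each G' N (size G).
  exact: phi_cont near.
apply: filterS => z zN [G' G'n G'z].
by have := meets_each_size dN (zN G' G'z); rewrite leqNgt (leq_ltn_trans G'n nG).
Qed.

Lemma exists_small_support_cylinder : exists n y m,
  cylinder y m `<=` small_support n /\
  forall G, supports T (phi y) G -> (n <= size G)%N.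
Proof.
have [n0 [y0 [m0 S0]]] : exists n y m, cylinder y m `<=` small_support n.
  apply: cylinder_baire; first exact: small_support_closed.
  by move=> y; have [G Gy] := exists_support HT (phi y); exists (size G), G.
have ex : exists n, `[< exists y m, cylinder y m `<=` small_support n >].
  by exists n0; apply/asboolP; exists y0, m0.
case: (ex_minnP ex) => -[|n] /asboolP [y1 [m1 S1]] nmin.
  by exists 0%N, y1, m1.
have [y [y1y nSy]] : exists y, cylinder y1 m1 y /\ ~ small_support n y.
  apply: contrapT => noy; suff : (n.+1 <= n)%N by rewrite ltnn.
  apply: nmin; apply/asboolP; exists y1, m1 => z y1z.
  by apply: contrapT => nSz; apply: noy; exists z.
exists n.+1, y, m1; split.
  exact: subset_trans (cylinder_sub (leqnn _) y1y) S1.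
by move=> G Gy; rewrite ltnNge; apply/negP => Gn; apply: nSy; exists G.
Qed.

Lemma no_common_support_cylinder y m G :
  ~ (forall z, cylinder y m z -> supports T (phi z) G).
Proof.
move=> Gyz; pose zp (i : 'I_(size G).+1) : cantor_space :=
  fun l => if (l < m)%N then y l else (l == m + i)%N.
have zp_inj : injective zp.
  move=> i j /(congr1 (fun s : cantor_space => s (m + i)%N)).
  rewrite /zp ltnNge leq_addr /= eqxx eqn_add2l => /esym/eqP ij; exact: val_inj.
apply: (no_common_support cL hL HT (inj_comp phi_inj zp_inj)) => i.
by apply: Gyz => l lm; rewrite /zp lm.
Qed.

(* Near [w] every support meets each of the [n] disjoint open sets [N j] and
   some support has at most [n] points, so a minimal support has exactly one
   point in each [N j]. *)
Section MovingSupport.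
Variables (x0 : K) (w : cantor_space) (M n : nat) (N : nat -> set K).
Hypotheses (oN : forall j, open (N j)) (dN : trivIset `I_n N).
Hypothesis w_small : cylinder w M `<=` small_support n.
Hypothesis w_meets : forall z, cylinder w M z ->
  forall G, supports T (phi z) G -> meets_each G N n.

Let min_support_near z : cylinder w M z -> exists G, min_support T (phi z) G /\
  forall x, x \in G -> exists j, [/\ (j < n)%N, N j x &
    forall x', x' \in G -> N j x' -> x' = x].
Proof.
move=> wz; have [G [Gz Gmin]] := exists_min_support HT (phi z).
have meets := w_meets wz Gz; have [G' G'n G'z] := w_small wz.
exists G; split => //; apply: meets_each_unique dN meets _.
exact: leq_trans (Gmin _ G'z) G'n.
Qed.

Let essential_unique z j p p' : cylinder w M z -> (j < n)%N ->
  N j p -> essential T (phi z) p -> N j p' -> essential T (phi z) p' -> p' = p.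
Proof.
move=> wz jn Np ep Np' ep'; have [G [[Gz _] Gpart]] := min_support_near wz.
have [j' [j'n Nj'p p_only]] := Gpart p (essential_mem hK ep Gz).
apply: p_only (essential_mem hK ep' Gz) _.
by have -> : j' = j by apply: (dN j'n jn); exists p.
Qed.

(* [x0] is a junk value, never taken on [cylinder w M]. *)
Definition moving_point j z : K :=
  if pselect (exists p, N j p /\ essential T (phi z) p) is left e
  then projT1 (cid e) else x0.

Lemma moving_pointP z j : cylinder w M z -> (j < n)%N ->
  N j (moving_point j z) /\ essential T (phi z) (moving_point j z).
Proof.
move=> wz jn; rewrite /moving_point; case: pselect => [e|].
  exact: projT2 (cid e).
move=> []; have [G [[Gz Gmin] _]] := min_support_near wz.
have [p pG Np] := w_meets wz Gz jn.
have ep := min_support_essential cK hK HT (conj Gz Gmin) pG.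
by exists p; split => //; exact: ep.
Qed.

Lemma moving_points_support z : cylinder w M z ->
  supports T (phi z) [seq moving_point j z | j <- iota 0 n].
Proof.
move=> wz f cf f0; have [G [[Gz Gmin] Gpart]] := min_support_near wz.
apply: (Gz) => // x xG; apply: f0; have [j [jn Njx _]] := Gpart x xG.
have [Nj ej] := moving_pointP wz jn.
have ess_x := min_support_essential cK hK HT (conj Gz Gmin) xG.
rewrite (essential_unique wz jn Nj ej Njx ess_x).
by apply/mapP; exists j; rewrite ?mem_iota.
Qed.

Lemma moving_point_continuous j : (j < n)%N ->
  {within cylinder w M, continuous (moving_point j)}.
Proof.
move=> jn; apply/within_continuous_cylinderP => z wz U oU Uz.
have [Nj ej] := moving_pointP wz jn.
have [F [cF F0 TF]] := ej (U `&` N j) (openI oU (oN j)) (conj Uz Nj).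
have TFn : \forall l \near phi z, T F l != 0 by apply: cvgr_neq0 TF; exact: T_cont.
have /nbhs_cylinder [m Fm] : \forall z' \near z, T F (phi z') != 0.
  exact: phi_cont TFn.
exists m => z' [zz' wz'] /=; have [G [[Gz' Gmin] _]] := min_support_near wz'.
have [q qG Fq] : exists2 q, q \in G & F q != 0.
  apply: contrapT => /forall2NP noq; move: (Fm z' zz') => /eqP; apply.
  by apply: Gz' => // q qG; case: (noq q) => // /negP; rewrite negbK => /eqP.
have [Uq Nq] : (U `&` N j) q by apply: contrapT => nq; move: Fq; rewrite F0 ?eqxx.
have [Nj' ej'] := moving_pointP wz' jn.
have ess_q := min_support_essential cK hK HT (conj Gz' Gmin) qG.
by rewrite (essential_unique wz' jn Nq ess_q Nj' ej').
Qed.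

End MovingSupport.

Lemma exists_moving_support : exists w M n (xs : nat -> cantor_space -> K),
  (forall j, (j < n)%N -> {within cylinder w M, continuous (xs j)}) /\
  forall z, cylinder w M z -> supports T (phi z) [seq xs j z | j <- iota 0 n].
Proof.
have [x0 _] := Cp_surj_nonempty HT (phi point).
have [n [y [m [ym_small y_large]]]] := exists_small_support_cylinder.
have [G [Gy Gmin]] := exists_min_support HT (phi y).
have sG : size G = n.
  have [G' G'n G'y] := ym_small y (@cylinder_center y m).
  by apply/eqP; rewrite eqn_leq y_large // (leq_trans (Gmin _ G'y) G'n).
have [N [oN dN near]] := near_supports_meet cK hK HT (conj Gy Gmin).
rewrite sG in dN near.
have /nbhs_cylinder [m' ym'] :
    \forall z \near y, forall G', supports T (phi z) G' -> meets_each G' N n.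
  exact: phi_cont near.
pose M := maxn m m'.
have yM_small : cylinder y M `<=` small_support n.
  by apply: subset_trans ym_small; apply: cylinderS; exact: leq_maxl.
have yM_meets z : cylinder y M z ->
    forall G', supports T (phi z) G' -> meets_each G' N n.
  by move=> yz; apply: ym'; apply: cylinderS yz; exact: leq_maxr.
exists y, M, n, (moving_point x0 N); split => [j jn|z yz].
  exact: (moving_point_continuous oN dN yM_small yM_meets jn).
exact: (moving_points_support dN yM_small yM_meets yz).
Qed.

End CantorSupports.

Unset Implicit Arguments.

Theorem theorem4p6 (R : realType) (K L : topologicalType)
  (cK : compact [set: K]) (hK : hausdorff_space K)
  (cL : compact [set: L]) (hL : hausdorff_space L)
  (T : (K -> R) -> (L -> R)) (HT : Cp_cont_linear_surj T) :
  contains_cantor L -> contains_cantor K.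
Proof.
move=> [A [phi [g [_ gphi _ phi_cont _]]]].
have phi_inj : injective phi := can_inj gphi.
have [w [M [n [xs [xs_cont xs_supp]]]]] := exists_moving_support cK hK HT phi_cont.
have [[j jn [v [p [vw nlc]]]]|[v [p [vw xs_const]]]] :=
  constant_or_nowhere_locally_constant xs w M n.
  exact: (@contains_cantor_scheme K hK (xs j) v p
    (continuous_subspaceW vw (xs_cont j jn)) nlc).
exfalso; apply: (no_common_support_cylinder cL hL HT phi_inj (y := v) (m := p)
  (G := [seq xs j v | j <- iota 0 n])).
move=> z vz; have -> : [seq xs j v | j <- iota 0 n] = [seq xs j z | j <- iota 0 n].
  by apply/eq_in_map => j; rewrite mem_iota => /andP [_ jn]; rewrite (xs_const j z).
exact: xs_supp (vw _ vz).
Qed.
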